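(* Let $\theta>0$, $q>0$, let $r$ be a positive integer, and let $\mathcal{U}$ be a distribution on $[0,1]$ that is $(\theta,q)$-polynomially bounded below at 1. Let $\phi:[m]\to[n]$ be any fixed allocation of $m$ items to $n$ agents, let $z_i=|\phi^{-1}(i)|$, and let the utilities $u_i(j)$ ($i\in[n]$, $j\in[m]$) be drawn independently from $\mathcal{U}$. Let $\rho:=\left(1-\left(\theta\left(\frac{1}{r+1}\right)^q\right)^{r+1}\right)^{1/4}$. Then for every pair of agents $i,i'$ with $z_i\leq r<z_{i'}$, $$\Pr\left[\sum_{j\in\phi^{-1}(i')}u_i(j)\leq z_i\right]\leq\rho^{z_{i'}/r}.$$
   Context: A distribution $\mathcal{U}$ on $[0,1]$ is $(\theta,q)$-polynomially bounded below at 1 if for every $\alpha\in(0,1]$, $\Pr_{u\sim\mathcal{U}}[u>1-\alpha]\geq\theta\alpha^q$ (this forces $\theta\leq 1$). An allocation $\phi:[m]\to[n]$ assigns item $j$ to agent $\phi(j)$. *)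

From HB Require Import structures.
From mathcomp Require Import all_boot all_order all_algebra.
From mathcomp Require Import all_classical all_reals all_analysis.
Set Implicit Arguments. Unset Strict Implicit. Unset Printing Implicit Defensive.
Import Order.TTheory GRing.Theory Num.Theory.
Local Open Scope classical_set_scope.
Local Open Scope ring_scope.

Definition poly_bounded_below_at1 (R : realType) (U : probability R R) (theta q : R) :=
  forall alpha : R, 0 < alpha <= 1 ->
    ((theta * alpha `^ q)%:E <= U [set x : R | (1 - alpha < x)%R])%E.

Definition supported_on_01 (R : realType) (U : probability R R) :=
  U [set x : R | (0 <= x <= 1)%R] = 1%E.

Definition mutually_independent (R : realType) d (T : measurableType d)
  (P : probability T R) (I : finType) (X : I -> {RV P >-> R}) :=
  forall (S : {set I}) (B : I -> set R), (forall k, measurable (B k)) ->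
    P [set w | forall k, k \in S -> B k (X k w)] =
    (\prod_(k in S) P (X k @^-1` B k))%E.

Definition rho_const (R : realType) (theta q : R) (r : nat) : R :=
  (1 - (theta * (1 / (r.+1)%:R) `^ q) ^+ r.+1) `^ (1 / 4).

From HB Require Import structures.
From mathcomp Require Import all_boot all_order all_algebra.
From mathcomp Require Import all_classical all_reals all_analysis.
From mathcomp Require Import measurable_realfun ring zify.

(* Split the r+1 < z_{i'} items of agent i' into K = z_{i'} / (r+1) disjoint
   blocks of r+1 items.  Utilities are nonnegative almost surely, so if in some
   block all of agent i's utilities exceed 1 - 1/(r+1), then her value for the
   bundle of i' exceeds (r+1)(1 - 1/(r+1)) = r >= z_i.  Each block is full in
   this sense with probability at least p^(r+1), where p = theta (1/(r+1))^q,
   and by independence no block is full with probability at most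
   (1 - p^(r+1))^K.  Finally z_{i'} <= 4rK turns this into rho^(z_{i'}/r). *)

Set Implicit Arguments.
Unset Strict Implicit.
Unset Printing Implicit Defensive.
Import Order.TTheory GRing.Theory Num.Theory.
Local Open Scope classical_set_scope.
Local Open Scope ring_scope.

Lemma mutually_independent_comp (R : realType) d (T : measurableType d)
    (P : probability T R) (I J : finType) (X : I -> {RV P >-> R}) (f : J -> I) :
  injective f -> mutually_independent X -> mutually_independent (fun j => X (f j)).
Proof.
move=> f_inj indX S B mB.
pose B' i := if [pick j in S | f j == i] is Some j then B j else setT.
have B'f j : j \in S -> B' (f j) = B j.
  move=> jS; rewrite /B'; case: pickP => [k /andP[_ /eqP /f_inj -> //]|].
  by move=> /(_ j); rewrite jS eqxx.
have mB' i : measurable (B' i) by rewrite /B'; case: pickP.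
have := indX (f @: S)%SET B' mB'.
rewrite big_imset /=; last by move=> j k _ _ /f_inj.
rewrite (eq_bigr (fun j => P (X (f j) @^-1` B j))); last by move=> j /B'f ->.
move=> <-; congr (P _); apply/seteqP; split => w /= h.
  by move=> _ /imsetP[j jS ->]; rewrite B'f //; exact: h.
by move=> j jS; rewrite -B'f //; apply: h; exact: imset_f.
Qed.

Lemma le_probability_on_full (R : realType) d (T : measurableType d)
    (P : probability T R) (A B G : set T) :
  measurable A -> measurable B -> measurable G -> P G = 1%E ->
  A `<=` B `|` ~` G -> (P A <= P B)%E.
Proof.
move=> mA mB mG PG AB; have PnG : P (~` G) = 0%E by rewrite probability_setC // PG subee.
rewrite -(measureU0 mB (measurableC mG) PnG).
by apply: le_measure AB; rewrite inE //; exact/measurableU/measurableC.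
Qed.

Lemma supported_on_01_ge0 (R : realType) (U : probability R R) :
  supported_on_01 U -> U [set x | 0 <= x] = 1%E.
Proof.
have m01 : measurable [set x : R | 0 <= x <= 1].
  rewrite (_ : [set x | 0 <= x <= 1] = `[0, 1]%classic); first exact: measurable_itv.
  by apply/seteqP; split => x /=; rewrite in_itv.
have mge0 : measurable [set x : R | 0 <= x] by rewrite -set_itvcy; exact: measurable_itv.
move=> U01; apply/le_anti; rewrite probability_le1 //= -U01.
by rewrite le_measure ?inE // => x /andP[].
Qed.

Lemma poly_bounded_tail_bounds (R : realType) (U : probability R R) (theta q alpha : R) :
  poly_bounded_below_at1 U theta q -> 0 < alpha <= 1 ->
  theta * alpha `^ q <= fine (U [set x | 1 - alpha < x]) <= 1.
Proof.
move=> Ubound alpha01; have mA : measurable [set x : R | 1 - alpha < x].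
  by rewrite -set_itvoy; exact: measurable_itv.
rewrite -!lee_fin fineK ?fin_num_measure // Ubound //; exact: probability_le1.
Qed.

Lemma disjoint_blocks (I : finType) (J : {set I}) (s K : nat) :
  (K * s <= #|J|)%N ->
  exists Bl : nat -> {set I},
    [/\ forall t, Bl t \subset J, forall t, (t < K)%N -> #|Bl t| = s
      & forall t t', t != t' -> ([disjoint Bl t & Bl t'])%B].
Proof.
elim: K J => [|K IH] J KsJ.
  exists (fun _ => finset.set0); split=> [t|t //|t t' _]; first exact: finset.sub0set.
  by rewrite -finset.setI_eq0 finset.set0I.
have sJ : (s <= #|J|)%N by apply: leq_trans _ KsJ; rewrite mulSn leq_addr.
have /card_geqP[l [l_uniq l_size lJ]] := sJ.
pose A := [set j in l]%SET.
have AJ : A \subset J by apply/fintype.subsetP => j; rewrite inE => /lJ.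
have cardA : #|A| = s by rewrite cardsE -l_size; exact/card_uniqP.
have [|Bl [BlJA cardBl disjBl]] := IH (J :\: A).
  by rewrite cardsDS // cardA leq_subRL // -mulSnr.
have [BlJ disjA] : (forall t, Bl t \subset J) /\ (forall t, ([disjoint A & Bl t])%B).
  by split=> t; have := BlJA t; rewrite subsetD disjoint_sym => /andP[].
exists (fun t => if t is t'.+1 then Bl t' else A); split.
- by case.
- by case=> [|t] // /cardBl.
- case=> [|t] [|t'] //= tt'; last exact: disjBl.
  by rewrite disjoint_sym.
Qed.

Lemma card_mulr_lt_sum (R : numDomainType) (I : finType) (J A : {set I})
    (f : I -> R) (c : R) :
  A \subset J -> (0 < #|A|)%N -> (forall j, j \in J -> 0 <= f j) ->
  (forall j, j \in A -> c < f j) -> #|A|%:R * c < \sum_(j in J) f j.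
Proof.
move=> AJ A_gt0 f_ge0 c_lt_f.
rewrite (big_setID A) /= (finset.setIidPr AJ) -[ltLHS]addr0.
apply: ltr_leD; last by apply: sumr_ge0 => j /setDP[jJ _]; exact: f_ge0.
rewrite mulr_natl -sumr_const; apply: ltr_sum => //.
by have /card_gt0P[j jA] := A_gt0; apply/hasP; exists j; rewrite ?mem_index_enum.
Qed.

Lemma prod_one_sub_prod_le (R : realDomainType) (I : finType)
    (Bl : nat -> {set I}) (a : I -> R) (p : R) (s K : nat) :
  0 <= p -> (forall j, p <= a j <= 1) -> (forall t, (t < K)%N -> #|Bl t| = s) ->
  \prod_(t < K) (1 - \prod_(j in Bl t) a j) <= (1 - p ^+ s) ^+ K.
Proof.
move=> p_ge0 pa cardBl; rewrite -[in leRHS](card_ord K) -prodr_const.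
have a_ge0 j : 0 <= a j by case/andP: (pa j) => /(le_trans p_ge0).
apply: ler_prod => t _; rewrite subr_ge0 prodr_ile1 ?lerD2l ?lerN2 //=; last first.
  by move=> j _; rewrite a_ge0; case/andP: (pa j).
rewrite -(cardBl t (ltn_ord t)) -prodr_const.
by apply: ler_prod => j _; rewrite p_ge0; case/andP: (pa j).
Qed.

Lemma expr_le_powR (R : realType) (b x : R) (K : nat) :
  0 <= b <= 1 -> 0 <= x <= K%:R -> b ^+ K <= b `^ x.
Proof.
move=> /andP[b_ge0 b_le1] /andP[x_ge0 x_leK].
have [K0|K_gt0] := posnP K.
  by move: x_leK; rewrite K0 => x_le0; rewrite (@le_anti _ _ x 0) ?x_ge0 ?x_le0 // powRr0.
have [->|b_neq0] := eqVneq b 0; first by rewrite expr0n gtn_eqF ?powR_ge0.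
rewrite -powR_mulrn //; apply: ger_powR => //.
by rewrite lt0r b_neq0 b_ge0.
Qed.

Lemma leq_mul4_divS (r z : nat) :
  (0 < r)%N -> (r < z)%N -> (z <= 4 * r * (z %/ r.+1))%N.
Proof.
(* z < (K + 1)(r + 1) <= 2K * 2r, where K = z %/ (r + 1) >= 1 *)
move=> r_gt0 r_lt_z; have := ltn_ceil z (ltn0Sn r).
have : (0 < z %/ r.+1)%N by rewrite divn_gt0.
nia.
Qed.

Lemma rho_const_powR_ge (R : realType) (theta q : R) (r z K : nat) :
    (0 < r)%N -> (z <= 4 * r * K)%N -> 0 <= theta * (1 / (r.+1)%:R) `^ q <= 1 ->
  (1 - (theta * (1 / (r.+1)%:R) `^ q) ^+ r.+1) ^+ K <=
  rho_const theta q r `^ (z%:R / r%:R).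
Proof.
move=> r_gt0 zK /andP[p_ge0 p_le1]; rewrite /rho_const -powRrM.
apply: expr_le_powR.
  by rewrite subr_ge0 exprn_ile1 // lerBlDr lerDl exprn_ge0.
rewrite mulr_ge0 ?divr_ge0 //= (_ : 1 / 4 * _ = z%:R / (4 * r)%:R).
  by rewrite ler_pdivrMr ?ltr0n ?muln_gt0 // -natrM ler_nat mulnC.
by rewrite natrM; field; rewrite pnatr_eq0 -lt0n.
Qed.

Section cylinders.
Variables (R : realType) (d : measure_display) (T : measurableType d).
Variables (P : probability T R) (I : finType) (X : I -> {RV P >-> R}).

Definition cylinder (D : {set I}) (B : I -> set R) : set T :=
  [set w | forall j, j \in D -> B j (X j w)].

Lemma measurable_cylinder D B : (forall j, measurable (B j)) ->
  measurable (cylinder D B).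
Proof.
move=> mB.
rewrite (_ : cylinder D B = \bigcap_(j in [set j | j \in D]) X j @^-1` B j).
  apply: fin_bigcap_measurable => [|j _]; first exact: finite_finset.
  exact: measurable_funPTI.
by apply/seteqP; split => w /= h j; apply: h.
Qed.

Lemma cylinder_set0 B : cylinder finset.set0 B = setT.
Proof. by apply/seteqP; split => w // _ j; rewrite inE. Qed.

Lemma cylinderI (D D' : {set I}) (B B' : I -> set R) :
  ([disjoint D & D'])%B ->
  cylinder D B `&` cylinder D' B' =
  cylinder (D :|: D') (fun j => if j \in D then B j else B' j).
Proof.
move=> dDD'; apply/seteqP; split => w /=.
  by move=> [hD hD'] j; rewrite finset.in_setU; case: ifP => [jD _|_ /= jD']; auto.
move=> h; split => j jD; have := h j; rewrite finset.in_setU jD ?orbT.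
  by apply.
by rewrite (disjointFl dDD' jD); apply.
Qed.

Variables (Bl : nat -> {set I}) (H : I -> set R).
Hypothesis mH : forall j, measurable (H j).

Definition no_full_block k : set T :=
  [set w | forall t, (t < k)%N -> ~ cylinder (Bl t) H w].

Lemma measurable_no_full_block k : measurable (no_full_block k).
Proof.
rewrite (_ : no_full_block k = \bigcap_(t in `I_k) ~` cylinder (Bl t) H).
  apply: fin_bigcap_measurable => [|t _]; first exact: finite_II.
  exact/measurableC/measurable_cylinder.
by apply/seteqP; split => w /= h t; apply: h.
Qed.

Lemma no_full_blockS k :
  no_full_block k.+1 = no_full_block k `\` cylinder (Bl k) H.
Proof.
apply/seteqP; split => w /= h.
  by split => [t /ltnW|]; apply: h.
by case: h => h1 h2 t; rewrite ltnS leq_eqVlt => /orP[/eqP->|/h1].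
Qed.

Hypothesis indX : mutually_independent X.

Lemma probability_cylinder D B : (forall j, measurable (B j)) ->
  P (cylinder D B) = (\prod_(j in D) fine (P (X j @^-1` B j)))%:E.
Proof.
move=> mB; rewrite [LHS]indX // -prodEFin; apply: eq_bigr => j _.
by rewrite fineK // fin_num_measure //; exact: measurable_funPTI.
Qed.

Lemma probability_cylinderI (D D' : {set I}) (B B' : I -> set R) :
    ([disjoint D & D'])%B -> (forall j, measurable (B j)) ->
    (forall j, measurable (B' j)) ->
  fine (P (cylinder D B `&` cylinder D' B')) =
  fine (P (cylinder D B)) * fine (P (cylinder D' B')).
Proof.
move=> dDD' mB mB'; rewrite cylinderI // !probability_cylinder //; last first.
  by move=> j; case: ifP.
rewrite (eq_bigl [predU D & D']) => [|j]; last by rewrite !inE.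
rewrite bigU //=; congr (_ * _); apply: eq_bigr => j jD.
  by rewrite jD.
by rewrite (disjointFl dDD' jD).
Qed.

Hypothesis disjBl : forall t t', t != t' -> ([disjoint Bl t & Bl t'])%B.

Lemma probability_cylinder_no_full_block k (D : {set I}) (B : I -> set R) :
    (forall j, measurable (B j)) ->
    (forall t, (t < k)%N -> ([disjoint D & Bl t])%B) ->
  fine (P (cylinder D B `&` no_full_block k)) =
  fine (P (cylinder D B)) * \prod_(t < k) (1 - fine (P (cylinder (Bl t) H))).
Proof.
(* Intersecting the cylinder on D with "block k is full" gives the cylinder on
   D :|: Bl k, which is again disjoint from the earlier blocks. *)
elim: k D B => [|k IH] D B mB dDBl.
  rewrite (_ : no_full_block 0 = setT); last by apply/seteqP.
  by rewrite setIT big_ord0 mulr1.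
have mC := @measurable_cylinder D B mB.
pose B' j := if j \in D then B j else H j.
have mB' j : measurable (B' j) by rewrite /B'; case: ifP.
have dDk : ([disjoint D & Bl k])%B by exact: dDBl.
have dDk' t : (t < k)%N -> ([disjoint D :|: Bl k & Bl t])%B.
  move=> tk; rewrite -finset.setI_eq0 finset.setIUl finset.setU_eq0 !finset.setI_eq0.
  rewrite dDBl ?disjBl ?(ltnW tk) ?ltnS ?(ltnW tk) //.
  by rewrite neq_ltn tk orbT.
have mE := measurable_no_full_block k.
have mA := @measurable_cylinder (Bl k) H mH.
have mCE := measurableI _ _ mC mE.
rewrite no_full_blockS setIDA measureD //; last first.
  by have /fin_numPlt/andP[] := fin_num_measure P _ mCE.
rewrite fineB ?fin_num_measure //; last exact: measurableI.
have dDBlk t : (t < k)%N -> ([disjoint D & Bl t])%B by move/ltnW; exact: dDBl.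
rewrite setIAC cylinderI // !IH //.
by rewrite -cylinderI // probability_cylinderI // big_ord_recr /=; ring.
Qed.

Lemma probability_no_full_block k : fine (P (no_full_block k)) =
  \prod_(t < k) (1 - \prod_(j in Bl t) fine (P (X j @^-1` H j))).
Proof.
have := @probability_cylinder_no_full_block k finset.set0 (fun _ => setT).
rewrite cylinder_set0 setTI probability_setT mul1r => -> //; last first.
  by move=> t _; rewrite -finset.setI_eq0 finset.set0I.
by apply: eq_bigr => t _; rewrite probability_cylinder.
Qed.

Lemma probability_no_full_block_le (p : R) (s k : nat) :
    0 <= p -> (forall j, p <= fine (P (X j @^-1` H j)) <= 1) ->
    (forall t, (t < k)%N -> #|Bl t| = s) ->
  (P (no_full_block k) <= ((1 - p ^+ s) ^+ k)%:E)%E.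
Proof.
move=> p_ge0 pH cardBl; rewrite -(fineK (fin_num_measure _ _ (measurable_no_full_block k))).
by rewrite lee_fin probability_no_full_block prod_one_sub_prod_le.
Qed.

End cylinders.

Lemma measurable_sum_le (R : realType) d (T : measurableType d) (P : probability T R)
    (I : finType) (X : I -> {RV P >-> R}) (J : {set I}) (a : R) :
  measurable [set w | \sum_(j in J) X j w <= a].
Proof.
rewrite -[X in measurable X]setTI.
apply: (measurable_fun_ler _ (measurable_cst _)) => //.
under eq_fun do rewrite -big_filter.
by apply: measurable_sum => j; exact: measurable_funP.
Qed.

Lemma probability_sum_le_no_full_block (R : realType) d (T : measurableType d)
    (P : probability T R) (I : finType) (X : I -> {RV P >-> R}) (J : {set I})
    (Bl : nat -> {set I}) (a c : R) (s k : nat) :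
    P (cylinder X J (fun=> [set x | 0 <= x])) = 1%E ->
    (forall t, Bl t \subset J) -> (0 < s)%N -> (forall t, (t < k)%N -> #|Bl t| = s) ->
    a <= s%:R * c ->
  (P [set w | (\sum_(j in J) X j w <= a)%R] <=
   P (no_full_block X Bl (fun=> [set x | (c < x)%R]) k))%E.
Proof.
move=> PG BlJ s_gt0 cardBl a_le.
have mge0 : measurable [set x : R | 0 <= x] by rewrite -set_itvcy; exact: measurable_itv.
have mgtc : measurable [set x : R | c < x] by rewrite -set_itvoy; exact: measurable_itv.
apply: (le_probability_on_full (measurable_sum_le X J a)
  (measurable_no_full_block X Bl (fun=> mgtc) k)
  (measurable_cylinder X J (fun=> mge0)) PG).
move=> w /= sum_le; have [Gw|] := pselect (cylinder X J (fun=> [set x | 0 <= x]) w).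
  left=> t tk full; move: sum_le; apply/negP; rewrite -ltNge.
  apply: le_lt_trans a_le _; rewrite -(cardBl t tk).
  by apply: card_mulr_lt_sum (BlJ t) _ Gw full; rewrite cardBl.
by right.
Qed.

Theorem lemma5 (R : realType) (d : measure_display) (T : measurableType d)
  (P : probability T R) (U : probability R R) (theta q : R) (r n m : nat)
  (phi : 'I_m -> 'I_n) (u : 'I_n -> 'I_m -> {RV P >-> R}) (i i' : 'I_n) :
  0 < theta -> 0 < q -> (0 < r)%N ->
  supported_on_01 U -> poly_bounded_below_at1 U theta q ->
  mutually_independent (fun p : 'I_n * 'I_m => u p.1 p.2) ->
  (forall k j (A : set R), measurable A -> distribution P (u k j) A = U A) ->
  let z := fun k : 'I_n => #|[pred j : 'I_m | phi j == k]| in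
  (z i <= r < z i')%N ->
  (P [set w | (\sum_(j | phi j == i') u i j w <= (z i)%:R)%R]
     <= ((rho_const theta q r) `^ ((z i')%:R / r%:R))%:E)%E.
Proof.
move=> theta_gt0 _ r_gt0 U01 Ubound indep lawU z /andP[zi_le_r r_lt_zi'].
pose X := u i; pose J := [set j | phi j == i']%SET; pose s := r.+1.
pose alpha : R := 1 / s%:R; pose p := theta * alpha `^ q.
have indX : mutually_independent X.
  by apply: (mutually_independent_comp (f := pair i) _ indep) => j j' [].
have lawX j A : measurable A -> P (X j @^-1` A) = U A by move=> /(lawU i j A).
have alpha01 : 0 < alpha <= 1.
  by rewrite divr_gt0 ?ltr0n // ler_pdivrMr ?ltr0n // mul1r ler1n.
have /andP[pU Ule1] := poly_bounded_tail_bounds Ubound alpha01.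
have p01 : 0 <= p <= 1 by rewrite (le_trans pU Ule1) mulr_ge0 ?powR_ge0 ?ltW.
have [mHigh mNonneg] :
    measurable [set x : R | 1 - alpha < x] /\ measurable [set x : R | 0 <= x].
  by rewrite -set_itvoy -set_itvcy; split; exact: measurable_itv.
have pHigh j : p <= fine (P (X j @^-1` [set x | 1 - alpha < x])) <= 1.
  by rewrite lawX ?pU.
have [|Bl [BlJ cardBl disjBl]] := @disjoint_blocks _ J s (z i' %/ s).
  by rewrite cardsE leq_divM.
have PG : P (cylinder X J (fun=> [set x | 0 <= x])) = 1%E.
  by rewrite probability_cylinder // big1 // => j _; rewrite lawX ?supported_on_01_ge0.
have zi_le : (z i)%:R <= s%:R * (1 - alpha).
  by rewrite (_ : _ * _ = r%:R) ?ler_nat //= /alpha /s; field; rewrite nat1r pnatr_eq0.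
have sumJ w : \sum_(j | phi j == i') u i j w = \sum_(j in J) X j w.
  by apply: eq_bigl => j; rewrite inE.
under eq_set do rewrite sumJ.
apply: le_trans (probability_sum_le_no_full_block PG BlJ (ltn0Sn r) cardBl zi_le) _.
apply: le_trans (probability_no_full_block_le (fun=> mHigh) indX disjBl _ pHigh cardBl) _.
  by case/andP: p01.
by rewrite lee_fin rho_const_powR_ge // leq_mul4_divS.
Qed.
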